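(* A vector $w\in\mathbb{R}^n$, $w\ge0$, is strongly bilevel feasible if and only if both of the following hold: (i) there exists exactly one bilevel feasible decomposition $(w^k)_{k\in\mathcal{K}}$ of $w$; (ii) in this unique decomposition, each $w^k$ is individually strongly bilevel feasible.
   Context: Multi-commodity network pricing setting: $G=(\mathcal{V},\mathcal{A})$ directed graph with arc costs $c\ge0$, nonempty tolled arc set $\mathcal{A}_1\subsetneq\mathcal{A}$, $n=|\mathcal{A}_1|$, $N$ node–arc incidence matrix; finite set $\mathcal{K}$ of commodities, commodity $k$ having origin $o^k$ and destination $d^k$ connected by a path of arcs not in $\mathcal{A}_1$; $b^k_{o^k}=1$, $b^k_{d^k}=-1$, other entries $0$; $\mathcal{X}^k=\{x\in\mathbb{R}^{\mathcal{A}}: Nx=b^k,\ x\ge0\}$; $x_{\mathcal{A}_1}$ is the restriction of $x$ to $\mathcal{A}_1$. For $t\in\mathbb{R}^n$ let $f^k(t)=\min\{c^\top x+t^\top x_{\mathcal{A}_1}: x\in\mathcal{X}^k\}$ if $t\ge0$, $-\infty$ otherwise; $f=\sum_k f^k$; $g^k(w)=\sup_t\{f^k(t)-t^\top w\}$, $g(w)=\sup_t\{f(t)-t^\top w\}$. A vector $w\ge0$ is strongly bilevel feasible if $\{w\}$ is the projection onto $w$-space of a face of $\operatorname{epi}(g)$ whose affine hull's direction space does not contain $(0,1)$ (equivalently $\{(w,g(w))\}$ is a face of $\operatorname{epi}(g)$); $w^k\ge0$ is individually strongly bilevel feasible if the same holds with $g^k$ in place of $g$. A decomposition of $w$ is a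 tuple $(w^k)_{k\in\mathcal{K}}$ of vectors $w^k\ge0$ with $\sum_k w^k=w$; it is bilevel feasible if $g(w)=\sum_k g^k(w^k)$. *)

From mathcomp Require Import all_boot all_order all_algebra.
From mathcomp Require Import all_classical all_reals ereal.
Set Implicit Arguments. Unset Strict Implicit. Unset Printing Implicit Defensive.
Import Order.TTheory GRing.Theory Num.Theory.
Local Open Scope classical_set_scope.
Local Open Scope ring_scope.

Section NetworkPricing.
Variable R : realType.
Variables (V A : finType) (src dst : A -> V).
Variable c : A -> R.
Variable A1 : {set A}.
Variable K : finType.
Variables (o d : K -> V).

(* vectors of R^n, n = #|A1|, coordinate i <-> tolled arc enum_val i *)
Notation vecn := 'rV[R]_#|A1|.

Definition incidence (v : V) (a : A) : R := (src a == v)%:R - (dst a == v)%:R.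

Definition bvec (k : K) (v : V) : R := (v == o k)%:R - (v == d k)%:R.

Definition Xk (k : K) : set (A -> R) :=
  [set x | (forall v, \sum_a incidence v a * x a = bvec k v) /\ (forall a, 0 <= x a)].

Definition costx (x : A -> R) : R := \sum_a c a * x a.
Definition tollx (t : vecn) (x : A -> R) : R :=
  \sum_(i < #|A1|) t ord0 i * x (enum_val i).
Definition dotn (t w : vecn) : R := \sum_(i < #|A1|) t ord0 i * w ord0 i.

Definition nonneg (t : vecn) : bool := [forall i, 0 <= t ord0 i].

Definition fk (k : K) (t : vecn) : \bar R :=
  if nonneg t then ereal_inf [set (costx x + tollx t x)%:E | x in Xk k] else -oo%E.

Definition f (t : vecn) : \bar R := (\sum_k fk k t)%E.

Definition gk (k : K) (w : vecn) : \bar R :=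
  ereal_sup [set (fk k t - (dotn t w)%:E)%E | t in [set: vecn]].

Definition g (w : vecn) : \bar R :=
  ereal_sup [set (f t - (dotn t w)%:E)%E | t in [set: vecn]].

Definition pt := (vecn * R)%type.

Definition epi (h : vecn -> \bar R) : set pt := [set p | (h p.1 <= p.2%:E)%E].

Definition comb (l : R) (p q : pt) : pt :=
  (l *: p.1 + (1 - l) *: q.1, l * p.2 + (1 - l) * q.2).

Definition is_face (C F : set pt) : Prop :=
  F `<=` C /\
  (forall p q l, F p -> F q -> 0 <= l <= 1 -> F (comb l p q)) /\
  (forall p q l, C p -> C q -> 0 < l < 1 -> F (comb l p q) -> F p /\ F q).

(* v belongs to the direction space of aff(F), i.e. to span(F - F) *)
Definition in_dir_space (F : set pt) (v : pt) : Prop :=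
  exists (m : nat) (p q : 'I_m -> pt) (cf : 'I_m -> R),
    (forall i, F (p i) /\ F (q i)) /\
    v.1 = \sum_i cf i *: ((p i).1 - (q i).1) /\
    v.2 = \sum_i cf i * ((p i).2 - (q i).2).

Definition strongly_bf_wrt (h : vecn -> \bar R) (w : vecn) : Prop :=
  nonneg w /\
  exists F : set pt, is_face (epi h) F /\
    [set p.1 | p in F] = [set w] /\ ~ in_dir_space F (0, 1).

Definition strongly_bilevel_feasible (w : vecn) : Prop := strongly_bf_wrt g w.
Definition indiv_strongly_bilevel_feasible (k : K) (wk : vecn) : Prop :=
  strongly_bf_wrt (gk k) wk.

Definition decomposition (w : vecn) (wk : K -> vecn) : Prop :=
  (forall k, nonneg (wk k)) /\ \sum_k wk k = w.

Definition bilevel_feasible_decomposition (w : vecn) (wk : K -> vecn) : Prop :=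
  decomposition w wk /\ g w = (\sum_k gk k (wk k))%E.

Fixpoint walk (u : V) (p : seq A) (v : V) : Prop :=
  match p with
  | [::] => u = v
  | a :: p' => src a = u /\ walk (dst a) p' v
  end.

Definition network_assumptions : Prop :=
  (forall a, 0 <= c a) /\
  A1 != finset.set0 /\ A1 \proper finset.setT /\
  (forall k, o k != d k) /\
  (forall k, exists p : seq A, walk (o k) p (d k) /\ all (fun a => a \notin A1) p).

End NetworkPricing.

(* Strong bilevel feasibility of [w] means that [(w, g w)] is a finite extreme
   point of [epi g]: a face projecting onto [{w}] whose direction space misses
   [(0, 1)] is a single point.  Always [g (sum_k w^k) <= sum_k g^k w^k], and LP
   duality (Farkas' lemma, obtained by Fourier-Motzkin elimination) shows that
   some decomposition attains equality whenever [g w] is finite; so bilevel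
   feasible decompositions of [w] are exactly the optimal ones.
   If [(w, g w)] is extreme, moving one component of an optimal decomposition
   inside [epi g^k] moves [(w, g w)] inside [epi g], so every component is
   extreme in [epi g^k]; and the average of two optimal decompositions is
   optimal with midpoint components, which forces the two to agree.
   Conversely, if [(w, g w)] is a proper convex combination of two points of
   [epi g], the same combination of optimal decompositions of these points is
   an optimal decomposition of [w], hence the unique one, and extremality of
   its components forces both points to be [(w, g w)]. *)

From mathcomp Require Import all_boot all_order all_algebra.
From mathcomp Require Import all_classical all_reals ereal.
From mathcomp Require Import ring lra.
Set Implicit Arguments. Unset Strict Implicit. Unset Printing Implicit Defensive.
Import Order.TTheory GRing.Theory Num.Theory.
Local Open Scope classical_set_scope.
Local Open Scope ring_scope.

Lemma sum_pair (M : nmodType) (I J : finType) (F : I * J -> M) :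
  \sum_p F p = \sum_i \sum_j F (i, j).
Proof. by rewrite pair_bigA; apply: eq_bigr => -[]. Qed.

Lemma ler_sum_eq (R : realDomainType) (I : finType) (x y : I -> R) :
  (forall i, x i <= y i) -> \sum_i y i <= \sum_i x i -> forall i, x i = y i.
Proof.
move=> le_xy le_sum; have [_] := leif_sum (fun i (_ : true) => leif_eq (le_xy i)).
have -> : (\sum_i x i == \sum_i y i) by rewrite eq_le ler_sum.
by move=> /esym/forall_inP xy i; apply/eqP/xy.
Qed.

Lemma sum_replace (M : zmodType) (I : finType) (F : I -> M) j x :
  \sum_i F i - F j + x = \sum_i (if i == j then x else F i).
Proof.
rewrite [RHS](bigD1 j) //= eqxx (bigD1 j) //= [F j + _]addrC addrK addrC; congr (_ + _).
by apply: eq_bigr => i /negbTE ->.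
Qed.

Lemma comb_eq_lb (R : realFieldType) (l x y m : R) :
  0 < l < 1 -> m <= x -> m <= y -> l * x + (1 - l) * y = m -> x = m /\ y = m.
Proof. by move=> /andP[l_gt0 l_lt1] m_le_x m_le_y xy_m; split; nra. Qed.

Lemma exists_between (R : realDomainType) (I : finType) (L U : I -> R) (PL PU : pred I) :
  (forall p q, PL q -> PU p -> L q <= U p) ->
  exists z, (forall q, PL q -> L q <= z) /\ (forall p, PU p -> z <= U p).
Proof.
move=> LleU; case: (pickP PL) => [q0 Pq0|PL0].
  exists (\big[Num.max/L q0]_(q | PL q) L q); split.
    by move=> q Pq; rewrite (bigD1 q) //= le_max lexx.
  move=> p Pp; elim/big_ind: _ => //; first exact: LleU.
    by move=> x y ? ?; rewrite ge_max; apply/andP.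
  by move=> q Pq; apply: LleU.
exists (\big[Num.min/0]_(p | PU p) U p); split; first by move=> q; rewrite PL0.
by move=> p Pp; rewrite (bigD1 p) //= ge_min lexx.
Qed.

Lemma exists_scale_gt (R : realFieldType) (lam gam D : R) :
  0 <= lam -> lam * gam < D -> exists s, [/\ 0 < s, s * lam <= 1 & gam < s * D].
Proof.
move=> lam_ge0 lt_D; have [lam_gt0|lam_le0] := ltP 0 lam.
  exists lam^-1; split; rewrite ?invr_gt0 ?mulVf ?gt_eqF //.
  by rewrite mulrC ltr_pdivlMr // mulrC.
have lam0 : lam = 0 by apply/le_anti/andP.
rewrite lam0 mul0r in lt_D; exists ((`|gam| + 1) / D); split.
- by rewrite divr_gt0 // ltr_pwDr.
- by rewrite lam0 mulr0.
- by rewrite divfK ?gt_eqF // (le_lt_trans (ler_norm gam)) ?ltrDl.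
Qed.

(** * Farkas' lemma by Fourier-Motzkin elimination *)

Section FourierMotzkinRows.
Variables (R : realFieldType) (I : finType) (al : I -> R).

(* Rows of the system after eliminating a variable with coefficients [al]:
   [inl i] keeps a row with [al i = 0]; [inr (p, q)] with [al p > 0 > al q]
   is the combination [- al q * row p + al p * row q]; every other index is
   a dummy row, made trivially satisfiable through [fm_dummy]. *)
Definition fm_comb (h : I -> R) (r : I + I * I) : R :=
  match r with
  | inl i => if al i == 0 then h i else 0
  | inr (p, q) => if (0 < al p) && (al q < 0) then - al q * h p + al p * h q else 0
  end.

Definition fm_dummy (r : I + I * I) : bool :=
  match r with
  | inl i => al i != 0
  | inr (p, q) => ~~ ((0 < al p) && (al q < 0))
  end.

Definition fm_mult (y : I + I * I -> R) (i : I) : R :=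
  (if al i == 0 then y (inl i) else 0)
  + \sum_q (if (0 < al i) && (al q < 0) then y (inr (i, q)) * - al q else 0)
  + \sum_p (if (0 < al p) && (al i < 0) then y (inr (p, i)) * al p else 0).

Lemma fm_multE (y : I + I * I -> R) (h : I -> R) :
  \sum_i fm_mult y i * h i = \sum_r y r * fm_comb h r.
Proof.
rewrite big_sumType /=.
have -> : \sum_(pq : I * I) y (inr pq) * fm_comb h (inr pq) =
    \sum_p \sum_q ((if (0 < al p) && (al q < 0) then y (inr (p, q)) * - al q else 0) * h p
                 + (if (0 < al p) && (al q < 0) then y (inr (p, q)) * al p else 0) * h q).
  rewrite pair_bigA; apply: eq_bigr => -[p q] _ /=.
  by case: ifP => _; rewrite ?mul0r ?mulr0 ?addr0 // mulrDr !mulrA.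
under [X in _ = _ + X]eq_bigr => p _ do rewrite big_split /= -mulr_suml.
rewrite big_split /= [X in _ + (_ + X)]exchange_big /=.
rewrite /fm_mult; under eq_bigr do rewrite !mulrDl.
rewrite !big_split /= addrA; congr (_ + _ + _).
  by apply: eq_bigr => i _; case: ifP; rewrite ?mul0r ?mulr0.
by apply: eq_bigr => i _; rewrite mulr_suml.
Qed.

Lemma fm_mult_ge0 (y : I + I * I -> R) i :
  (forall r, 0 <= y r) -> 0 <= fm_mult y i.
Proof.
move=> y_ge0; rewrite /fm_mult; apply: addr_ge0; first apply: addr_ge0.
- by case: ifP.
- by apply: sumr_ge0 => q _; case: ifP => // /andP[_ ?]; apply: mulr_ge0 => //; lra.
- by apply: sumr_ge0 => p _; case: ifP => // /andP[? _]; apply: mulr_ge0 => //; lra.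
Qed.

Lemma fm_comb_elim r : fm_comb al r = 0.
Proof.
case: r => [i|[p q]] /=; first by case: ifP => // /eqP.
by case: ifP => // _; rewrite mulrC; lra.
Qed.

End FourierMotzkinRows.

Section FourierMotzkinStep.
Variables (R : realFieldType) (n : nat) (I : finType).
Variables (a : I -> 'I_n.+1 -> R) (b : I -> R).
Let al i := a i ord_max.
Let a_rest i (j : 'I_n) := a i (widen_ord (leqnSn n) j).

Let widen_lift (j : 'I_n) : widen_ord (leqnSn n) j = lift ord_max j.
Proof. by apply: ord_inj; rewrite lift_max. Qed.

Definition fm_lhs (r : I + I * I) (j : 'I_n) := fm_comb al (a_rest ^~ j) r.
Definition fm_rhs (r : I + I * I) := fm_comb al b r + (fm_dummy al r)%:R.

Lemma fm_solution_lift (x : 'I_n -> R) :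
  (forall r, \sum_j fm_lhs r j * x j <= fm_rhs r) ->
  exists x' : 'I_n.+1 -> R, forall i, \sum_j a i j * x' j <= b i.
Proof.
move=> x_sol; pose S i := \sum_j a_rest i j * x j.
have lhsE r : \sum_j fm_lhs r j * x j = fm_comb al S r.
  case: r => [i|[p q]]; rewrite /fm_lhs /fm_comb; case: ifP => _ //;
    try by rewrite big1 // => j _; rewrite mul0r.
  by under eq_bigr do rewrite mulrDl -!mulrA; rewrite big_split -!mulr_sumr.
have S_le0 i : al i = 0 -> S i <= b i.
  by move=> al0; have := x_sol (inl i); rewrite lhsE /fm_rhs /= al0 eqxx addr0.
have S_lepair p q : 0 < al p -> al q < 0 ->
    - al q * S p + al p * S q <= - al q * b p + al p * b q.
  move=> alp alq; have := x_sol (inr (p, q)).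
  by rewrite lhsE /fm_rhs /= alp alq addr0.
pose bnd i := (b i - S i) / al i.
have [z [z_lb z_ub]] : exists z, (forall q, al q < 0 -> bnd q <= z) /\
                                 (forall p, 0 < al p -> z <= bnd p).
  apply: exists_between => p q alq alp.
  have bpE : b p = bnd p * al p + S p by rewrite /bnd divfK ?subrK ?gt_eqF.
  have bqE : b q = bnd q * al q + S q by rewrite /bnd divfK ?subrK ?lt_eqF.
  have := S_lepair p q alp alq; rewrite bpE bqE => H.
  have alpq : 0 < al p * - al q by rewrite mulr_gt0 ?oppr_gt0.
  rewrite -subr_ge0 -(pmulr_rge0 _ alpq); move: H; rewrite -subr_ge0.
  by congr (0 <= _); ring.
exists (fun j => if unlift ord_max j is Some j' then x j' else z) => i.
rewrite big_ord_recr /= unlift_none.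
under eq_bigr do rewrite widen_lift liftK -widen_lift.
rewrite -/(S i) -/(al i); case: (ltgtP (al i) 0) => ali.
- by have := z_lb i ali; rewrite ler_ndivrMr // mulrC -lerBrDl.
- by have := z_ub i ali; rewrite ler_pdivlMr // mulrC -lerBrDl.
- by rewrite ali mul0r addr0 S_le0.
Qed.

Lemma fm_certificate_lift (y : I + I * I -> R) :
  (forall r, 0 <= y r) -> (forall j, \sum_r y r * fm_lhs r j = 0) ->
  \sum_r y r * fm_rhs r < 0 ->
  exists y' : I -> R, [/\ forall i, 0 <= y' i, forall j, \sum_i y' i * a i j = 0
                      & \sum_i y' i * b i < 0].
Proof.
move=> y_ge0 y_lhs y_rhs; exists (fm_mult al y); split.
- by move=> i; apply: fm_mult_ge0.
- move=> j; rewrite fm_multE; case: (unliftP ord_max j) => [j'|] ->.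
    rewrite -[RHS](y_lhs j'); apply: eq_bigr => r _; congr (_ * fm_comb _ _ _).
    by apply: funext => i; rewrite /a_rest widen_lift.
  by rewrite big1 // => r _; rewrite fm_comb_elim mulr0.
- rewrite fm_multE; apply: le_lt_trans y_rhs; apply: ler_sum => r _.
  by apply: ler_wpM2l => //; rewrite /fm_rhs lerDl.
Qed.

End FourierMotzkinStep.

Section Farkas.
Variable R : realFieldType.

Lemma farkas_ord (n : nat) (I : finType) (a : I -> 'I_n -> R) (b : I -> R) :
  (exists x : 'I_n -> R, forall i, \sum_j a i j * x j <= b i) \/
  (exists y : I -> R, [/\ forall i, 0 <= y i, forall j, \sum_i y i * a i j = 0
                       & \sum_i y i * b i < 0]).
Proof.
elim: n I a b => [|n IHn] I a b.
  case: (pickP (fun i => b i < 0)) => [i0 bi0|b_ge0].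
    right; exists (fun i => (i == i0)%:R); split; [by move=> i; case: (_ == _)|by case|].
    by rewrite (bigD1 i0) //= eqxx mul1r big1 ?addr0 // => i /negbTE ->; rewrite mul0r.
  by left; exists (fun _ => 0) => i; rewrite big_ord0 leNgt b_ge0.
case: (IHn _ (fm_lhs a) (fm_rhs a b)) => [[x x_sol]|[y [y_ge0 y_lhs y_rhs]]].
  by left; apply: fm_solution_lift x_sol.
by right; exact: (fm_certificate_lift y_ge0 y_lhs y_rhs).
Qed.

Lemma farkas (I J : finType) (a : I -> J -> R) (b : I -> R) :
  (exists x : J -> R, forall i, \sum_j a i j * x j <= b i) \/
  (exists y : I -> R, [/\ forall i, 0 <= y i, forall j, \sum_i y i * a i j = 0
                       & \sum_i y i * b i < 0]).
Proof.
have rank_bij : bijective (@enum_rank J) by exists enum_val; [exact: enum_rankK|exact: enum_valK].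
case: (@farkas_ord #|J| I (fun i k => a i (enum_val k)) b) => [[x x_sol]|[y [y_ge0 y_a y_b]]].
  left; exists (x \o enum_rank) => i; apply: le_trans (x_sol i).
  by rewrite (reindex _ (onW_bij _ rank_bij)); under eq_bigr do rewrite (@enum_rankK J).
right; exists y; split=> // j.
by rewrite -[RHS](y_a (enum_rank j)) (@enum_rankK J).
Qed.

End Farkas.

(** * Extreme points of epigraphs *)

Section ExtremePoints.
Variables (R : realType) (A : finType) (A1 : {set A}).
Local Notation vecn := 'rV[R]_#|A1|.
Local Notation pt := (pt R A1).

Definition extreme_point (C : set pt) (x : pt) : Prop :=
  forall p q l, C p -> C q -> 0 < l < 1 -> comb l p q = x -> p = x /\ q = x.

Lemma comb_id l (p : pt) : comb l p p = p.
Proof.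
case: p => u r; rewrite /comb /=; congr (_, _); last by ring.
by rewrite -scalerDl addrC subrK scale1r.
Qed.

Lemma comb_translate l (s : vecn) (t : R) (p q : pt) :
  comb l (s + p.1, t + p.2) (s + q.1, t + q.2) = (s + (comb l p q).1, t + (comb l p q).2).
Proof.
rewrite /comb /=; congr (_, _); last by ring.
by rewrite !scalerDr addrACA -scalerDl [l + _]addrC subrK scale1r.
Qed.

Lemma dir_free_face_point (F : set pt) (u : vecn) :
  [set p.1 | p in F] = [set u] -> ~ in_dir_space F (0, 1) ->
  exists r, F = [set (u, r)].
Proof.
move=> F_proj no_dir.
have F_fst p : F p -> p.1 = u.
  by move=> Fp; suff : [set u] p.1 by []; rewrite -F_proj; exists p.
have : [set p.1 | p in F] u by rewrite F_proj.
case=> -[u0 r] Fur _; have /= u0E := F_fst _ Fur; subst u0.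
exists r; apply/seteqP; split=> [[x s] Fxs|_ ->] //=.
have /= xE := F_fst _ Fxs; subst x.
have [->|s_neq_r] := eqVneq s r; first by [].
exfalso; apply: no_dir.
exists 1%N, (fun=> (u, s)), (fun=> (u, r)), (fun=> (s - r)^-1); split=> //.
by rewrite !big_ord1 /= subrr scaler0 mulVf ?subr_eq0.
Qed.

Lemma singleton_face_epi (h : vecn -> \bar R) (u : vecn) (r : R) :
  is_face (epi h) [set (u, r)] -> h u = r%:E /\ extreme_point (epi h) (u, r).
Proof.
move=> [F_sub [_ F_ext]]; have hu_le : (h u <= r%:E)%E by exact: (F_sub (u, r)).
have r_min s : (h u <= s%:E)%E -> r <= s.
  move=> hu_s; rewrite leNgt; apply/negP => s_lt_r.
  have epi_s : epi h (u, s) by [].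
  have epi_s' : epi h (u, 2 * r - s).
    by rewrite /epi /=; apply: le_trans hu_s _; rewrite lee_fin; lra.
  have mid : comb (1/2) (u, s) (u, 2 * r - s) = (u, r).
    by rewrite /comb /= -scalerDl addrC subrK scale1r; congr (_, _); field.
  have [] := F_ext _ _ _ epi_s epi_s' (_ : 0 < 1/2 < 1) (_ : [set (u, r)] _).
  - by apply/andP; split; lra.
  - by rewrite mid.
  by case=> /eqP; rewrite lt_eqF.
split=> [|p q l epi_p epi_q l01 pq_ur]; last first.
  by apply: F_ext epi_p epi_q l01 _; rewrite pq_ur.
move: hu_le r_min; case: (h u) => [x||] //=; last first.
  by move=> _ /(_ (r - 1) (leNye _)) r_le; exfalso; lra.
rewrite lee_fin => x_le /(_ x (lexx _)) r_le.
by congr _%:E; apply/eqP; rewrite eq_le x_le.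
Qed.

Lemma strongly_bf_wrtP (h : vecn -> \bar R) (u : vecn) :
  strongly_bf_wrt h u <->
  nonneg u /\ exists r, h u = r%:E /\ extreme_point (epi h) (u, r).
Proof.
split=> [[u_ge0 [F [F_face [F_proj no_dir]]]]|[u_ge0 [r [hu ext]]]].
  have [r F_ur] := dir_free_face_point F_proj no_dir.
  by split=> //; exists r; apply: singleton_face_epi; rewrite -F_ur.
split=> //; exists [set (u, r)]; split; [split; [|split]|split].
- by move=> _ ->; rewrite /epi /= hu.
- by move=> _ _ l -> ->; rewrite comb_id.
- by move=> p q l epi_p epi_q l01 /ext; apply.
- exact: image_set1.
- move=> [m [p [q [cf [pq_pt [_ dir2]]]]]]; move: dir2; rewrite big1 => [/eqP|i _].
    by rewrite oner_eq0.
  by have [-> ->] := pq_pt i; rewrite subrr mulr0.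
Qed.

End ExtremePoints.

(** * The network pricing problem *)

Section TollVectors.
Variables (R : realType) (A : finType) (A1 : {set A}).
Local Notation vecn := 'rV[R]_#|A1|.

Lemma nonneg_rowP (t : vecn) : reflect (forall i, 0 <= t ord0 i) (nonneg t).
Proof. exact: forallP. Qed.

Lemma nonneg0 : nonneg (0 : vecn).
Proof. by apply/nonneg_rowP => i; rewrite mxE. Qed.

Lemma nonnegZ l (t : vecn) : 0 <= l -> nonneg t -> nonneg (l *: t).
Proof. by move=> l_ge0 /nonneg_rowP t_ge0; apply/nonneg_rowP => i; rewrite mxE mulr_ge0. Qed.

Lemma nonnegD (t u : vecn) : nonneg t -> nonneg u -> nonneg (t + u).
Proof.
by move=> /nonneg_rowP t_ge0 /nonneg_rowP u_ge0; apply/nonneg_rowP => i; rewrite mxE addr_ge0.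
Qed.

Lemma dotn0l (u : vecn) : dotn 0 u = 0.
Proof. by rewrite /dotn big1 // => i _; rewrite mxE mul0r. Qed.

Lemma dotn0r (t : vecn) : dotn t 0 = 0.
Proof. by rewrite /dotn big1 // => i _; rewrite mxE mulr0. Qed.

Lemma dotnZl l (t u : vecn) : dotn (l *: t) u = l * dotn t u.
Proof. by rewrite /dotn mulr_sumr; apply: eq_bigr => i _; rewrite mxE mulrA. Qed.

Lemma dotnZr l (t u : vecn) : dotn t (l *: u) = l * dotn t u.
Proof. by rewrite /dotn mulr_sumr; apply: eq_bigr => i _; rewrite mxE mulrCA. Qed.

Lemma dotnDr (t u v : vecn) : dotn t (u + v) = dotn t u + dotn t v.
Proof. by rewrite /dotn -big_split; apply: eq_bigr => i _; rewrite mxE mulrDr. Qed.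

Lemma dotn_sumr (I : finType) (t : vecn) (u : I -> vecn) :
  dotn t (\sum_k u k) = \sum_k dotn t (u k).
Proof. by rewrite /dotn exchange_big; apply: eq_bigr => i _; rewrite summxE mulr_sumr. Qed.

Lemma tollxZ l (t : vecn) (x : A -> R) : tollx (l *: t) x = l * tollx t x.
Proof. by rewrite /tollx mulr_sumr; apply: eq_bigr => i _; rewrite mxE mulrA. Qed.

Lemma tollx_ge0 (t : vecn) (x : A -> R) : nonneg t -> (forall a, 0 <= x a) -> 0 <= tollx t x.
Proof. by move=> /nonneg_rowP t_ge0 x_ge0; apply: sumr_ge0 => i _; apply: mulr_ge0. Qed.

End TollVectors.

Section Network.
Variables (R : realType) (V A : finType) (src dst : A -> V) (c : A -> R).
Variables (A1 : {set A}) (K : finType) (o d : K -> V).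
Hypothesis net : network_assumptions src dst c A1 o d.
Local Notation vecn := 'rV[R]_#|A1|.
Local Notation X := (@Xk R V A src dst K o d).
Local Notation fk := (@fk R V A src dst c A1 K o d).
Local Notation f := (@f R V A src dst c A1 K o d).
Local Notation gk := (@gk R V A src dst c A1 K o d).
Local Notation g := (@g R V A src dst c A1 K o d).
Local Notation bfd := (bilevel_feasible_decomposition src dst c o d).

Lemma costx_ge0 (x : A -> R) : (forall a, 0 <= x a) -> 0 <= costx c x.
Proof.
have [c_ge0 _] := net.
by move=> x_ge0; apply: sumr_ge0 => a _; apply: mulr_ge0.
Qed.

Lemma walk_flow u p v : walk src dst u p v -> forall z,
  \sum_a incidence R src dst z a * (count_mem a p)%:R = (z == u)%:R - (z == v)%:R.
Proof.
elim: p u => [|a0 p IHp] u /=.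
  by move=> -> z; rewrite subrr big1 // => a _; rewrite mulr0.
move=> [src_a0 walk_p] z.
under eq_bigr do rewrite natrD mulrDr.
rewrite big_split /= (IHp _ walk_p) (bigD1 a0) //= eqxx mulr1 big1 ?addr0; last first.
  by move=> a /negbTE; rewrite eq_sym => ->; rewrite mulr0.
by rewrite /incidence src_a0 eq_sym [dst a0 == z]eq_sym; ring.
Qed.

Lemma exists_toll_free_flow k :
  exists x, X k x /\ forall i : 'I_#|A1|, x (enum_val i) = 0.
Proof.
have [_ [_ [_ [_ free_path]]]] := net; have [p [walk_p p_free]] := free_path k.
exists (fun a => (count_mem a p)%:R); split; first split.
- by move=> v; rewrite (walk_flow walk_p).
- by [].
move=> i; apply/eqP; rewrite pnatr_eq0 eqn0Ngt -has_count has_pred1.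
by apply: contraTN (enum_valP i) => /(allP p_free).
Qed.

Lemma fk_le k (t : vecn) x : nonneg t -> X k x -> (fk k t <= (costx c x + tollx t x)%:E)%E.
Proof. by move=> t_ge0 Xx; rewrite /fk t_ge0; apply: ereal_inf_lbound; exists x. Qed.

Lemma fk_ge k (t : vecn) r : nonneg t ->
  (forall x, X k x -> r <= costx c x + tollx t x) -> (r%:E <= fk k t)%E.
Proof.
move=> t_ge0 r_le; rewrite /fk t_ge0; apply: le_ereal_inf_tmp => _ [x Xx <-].
by rewrite lee_fin r_le.
Qed.

Lemma fk_Ny k (t : vecn) : ~~ nonneg t -> fk k t = -oo%E.
Proof. by move=> /negbTE t_ngt0; rewrite /fk t_ngt0. Qed.

Lemma fk_fin k (t : vecn) : nonneg t -> exists2 r, fk k t = r%:E & 0 <= r.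
Proof.
move=> t_ge0; have [x [Xx _]] := exists_toll_free_flow k.
have fk_ge0 : ((0 : R)%:E <= fk k t)%E.
  by apply: fk_ge => // y [_ y_ge0]; rewrite addr_ge0 ?costx_ge0 ?tollx_ge0.
move: fk_ge0 (fk_le t_ge0 Xx); case: (fk k t) => [r||] //= r_ge0 _.
by exists r; rewrite // -lee_fin.
Qed.

Lemma gk_ge k (u t : vecn) : (fk k t - (dotn t u)%:E <= gk k u)%E.
Proof. by apply: ereal_sup_ubound; exists t. Qed.

Lemma g_ge (u t : vecn) : (f t - (dotn t u)%:E <= g u)%E.
Proof. by apply: ereal_sup_ubound; exists t. Qed.

Lemma gk_ge0 k (u : vecn) : ((0 : R)%:E <= gk k u)%E.
Proof.
apply: le_trans (gk_ge k u 0); have [r -> r_ge0] := fk_fin k (nonneg0 _ _).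
by rewrite dotn0l -EFinB subr0 lee_fin.
Qed.

Lemma g_ge0 (u : vecn) : ((0 : R)%:E <= g u)%E.
Proof.
apply: le_trans (g_ge u 0); rewrite dotn0l sube0 /f sume_ge0 // => k _.
by have [r -> r_ge0] := fk_fin k (nonneg0 _ _).
Qed.

Lemma gk_le_cost k (u : vecn) x :
  X k x -> (forall i, x (enum_val i) <= u ord0 i) -> (gk k u <= (costx c x)%:E)%E.
Proof.
move=> Xx x_le; apply: ge_ereal_sup => _ [t _ <-].
have [t_ge0|t_ngt0] := boolP (nonneg t); last by rewrite fk_Ny // addNye leNye.
have [r fkE _] := fk_fin k t_ge0; have := fk_le t_ge0 Xx; rewrite fkE -EFinB !lee_fin.
have : tollx t x <= dotn t u.
  by apply: ler_sum => i _; move/nonneg_rowP: t_ge0 => t_ge0; rewrite ler_wpM2l ?x_le.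
lra.
Qed.

Lemma gk_fin k (u : vecn) : nonneg u -> exists2 r, gk k u = r%:E & 0 <= r.
Proof.
move=> /nonneg_rowP u_ge0; have [x [Xx x_free]] := exists_toll_free_flow k.
have x_le i : x (enum_val i) <= u ord0 i by rewrite x_free u_ge0.
move: (gk_ge0 k u) (gk_le_cost Xx x_le); case: (gk k u) => [r||] //= r_ge0 _.
by exists r; rewrite // -lee_fin.
Qed.

Lemma g_le_sum (u : K -> vecn) : (g (\sum_k u k) <= \sum_k gk k (u k))%E.
Proof.
apply: ge_ereal_sup => _ [t _ <-].
rewrite dotn_sumr -EFinN -sumrN -sumEFin /f -big_split.
by apply: lee_sum => k _; rewrite EFinN; apply: gk_ge.
Qed.

Lemma gk_convex k (u v : vecn) a b l : gk k u = a%:E -> gk k v = b%:E -> 0 <= l <= 1 ->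
  (gk k (l *: u + (1 - l) *: v) <= (l * a + (1 - l) * b)%:E)%E.
Proof.
move=> gku gkv /andP[l_ge0 l_le1]; apply: ge_ereal_sup => _ [t _ <-].
have := gk_ge k u t; have := gk_ge k v t; rewrite gku gkv.
case: (fk k t) => [r||]; [|by rewrite addye|by move=> _ _; rewrite addNye leNye].
rewrite dotnDr !dotnZr -!EFinB !lee_fin => v_le u_le.
have l1_ge0 : 0 <= 1 - l by rewrite subr_ge0.
by have := ler_wpM2l l_ge0 u_le; have := ler_wpM2l l1_ge0 v_le; nra.
Qed.

Lemma g_ge_scaled (u t : vecn) (lam : R) (B : K -> R) :
  nonneg t -> 0 <= lam ->
  (forall k x, X k x -> - B k <= lam * costx c x + tollx t x) ->
  forall s, 0 < s -> s * lam <= 1 -> ((s * (- \sum_k B k - dotn t u))%:E <= g u)%E.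
Proof.
move=> t_ge0 lam_ge0 B_le s s_gt0 s_lam; apply: le_trans (g_ge u (s *: t)).
rewrite dotnZl mulrDr [s * - dotn t u]mulrN EFinB leeB // -sumrN mulr_sumr -sumEFin /f.
apply: lee_sum => k _; apply: fk_ge; first exact: nonnegZ (ltW s_gt0) t_ge0.
move=> x Xx; rewrite tollxZ; have := ler_wpM2l (ltW s_gt0) (B_le k x Xx).
have : s * lam * costx c x <= costx c x.
  by rewrite -[leRHS]mul1r ler_wpM2r // costx_ge0 //; case: Xx.
by rewrite mulrDr mulrA; lra.
Qed.

Definition lp_con := (K * A + (K * V * bool + ('I_#|A1| + 'I_1)))%type.

(* Farkas form of the transportation problem behind [g u <= gam]: flows
   [x (k, a) >= 0] satisfying [N x^k = b^k] (as two inequalities, the sign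
   [(-1) ^+ s] selecting the direction), toll-arc loads at most [u] and total
   cost at most [gam]. *)
Definition lp_coef (r : lp_con) (j : K * A) : R :=
  match r with
  | inl ka => - (j == ka)%:R
  | inr (inl (k, v, s)) => (j.1 == k)%:R * ((-1) ^+ s * incidence R src dst v j.2)
  | inr (inr (inl i)) => (j.2 == enum_val i)%:R
  | inr (inr (inr _)) => c j.2
  end.

Definition lp_rhs (u : vecn) (gam : R) (r : lp_con) : R :=
  match r with
  | inl _ => 0
  | inr (inl (k, v, s)) => (-1) ^+ s * bvec R o d k v
  | inr (inr (inl i)) => u ord0 i
  | inr (inr (inr _)) => gam
  end.

Definition lp_row (r : lp_con) (x : K * A -> R) : R :=
  match r with
  | inl ka => - x ka
  | inr (inl (k, v, s)) => (-1) ^+ s * \sum_a incidence R src dst v a * x (k, a)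
  | inr (inr (inl i)) => \sum_k x (k, enum_val i)
  | inr (inr (inr _)) => \sum_k costx c (fun a => x (k, a))
  end.

Lemma lp_rowE r (x : K * A -> R) : \sum_j lp_coef r j * x j = lp_row r x.
Proof.
rewrite sum_pair; case: r => [[k a]|[[[k v] s]|[i|i]]] /=.
- rewrite (bigD1 k) //= (bigD1 a) //= eqxx mulN1r !big1 ?addr0 //.
    by move=> k' /negbTE k'_neq; apply: big1 => a' _; rewrite xpair_eqE k'_neq mulr0n oppr0 mul0r.
  by move=> a' /negbTE a'_neq; rewrite xpair_eqE a'_neq andbF mulr0n oppr0 mul0r.
- rewrite (bigD1 k) //= [X in _ + X]big1 ?addr0; last first.
    by move=> k' /negbTE k'_neq; apply: big1 => a _; rewrite k'_neq !mul0r.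
  by rewrite eqxx mulr_sumr; apply: eq_bigr => a _; rewrite mul1r mulrA.
- apply: eq_bigr => k _; rewrite (bigD1 (enum_val i)) //= eqxx mul1r big1 ?addr0 //.
  by move=> a /negbTE ->; rewrite mul0r.
- by apply: eq_bigr => k _.
Qed.

(* A Farkas certificate [y] is read as tolls [t] (toll rows), a cost weight
   [lam] (cost row) and constants [B k] (conservation rows) bounding every
   commodity's cost from below; scaling the tolls then pushes [g u] above [gam]. *)
Section Certificate.
Variable y : lp_con -> R.
Hypothesis y_ge0 : forall r, 0 <= y r.
Hypothesis y_coef : forall j, \sum_r y r * lp_coef r j = 0.

Let t : vecn := \row_i y (inr (inr (inl i))).
Let lam := y (inr (inr (inr ord0))).
Let B k := \sum_(kvs : K * V * bool)
  y (inr (inl kvs)) * ((-1) ^+ kvs.2 * (if kvs.1.1 == k then bvec R o d k kvs.1.2 else 0)).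

Lemma cert_orth (x : K * A -> R) : \sum_r y r * lp_row r x = 0.
Proof.
under eq_bigr do rewrite -lp_rowE mulr_sumr.
rewrite exchange_big big1 // => j _.
by under eq_bigr do rewrite mulrA; rewrite -mulr_suml y_coef mul0r.
Qed.

Lemma cert_flow_bound k x : X k x -> - B k <= lam * costx c x + tollx t x.
Proof.
move=> [flow_x x_ge0]; pose xk (j : K * A) := if j.1 == k then x j.2 else 0.
have := cert_orth xk; rewrite !big_sumType /= big_ord1.
have -> : \sum_(kvs : K * V * bool) y (inr (inl kvs)) * lp_row (inr (inl kvs)) xk = B k.
  apply: eq_bigr => -[[k' v] s] _ /=; congr (_ * (_ * _)); rewrite /xk /=.
  by case: eqP => _; rewrite ?flow_x // big1 // => a _; rewrite mulr0.
have -> : \sum_i y (inr (inr (inl i))) * lp_row (inr (inr (inl i))) xk = tollx t x.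
  apply: eq_bigr => i _; rewrite mxE /= (bigD1 k) //= /xk /= eqxx big1 ?addr0 //.
  by move=> k' /negbTE ->.
have -> : \sum_k' costx c (fun a => xk (k', a)) = costx c x.
  rewrite (bigD1 k) //= /xk /= eqxx big1 ?addr0 // => k' /negbTE k'_neq.
  by rewrite /costx big1 // => a _; rewrite k'_neq mulr0.
have : \sum_ka y (inl ka) * lp_row (inl ka) xk <= 0.
  apply: sumr_le0 => -[k' a] _; rewrite mulrN oppr_le0 mulr_ge0 //.
  by rewrite /xk; case: ifP.
rewrite -/lam; lra.
Qed.

Lemma cert_rhsE u gam : \sum_r y r * lp_rhs u gam r = \sum_k B k + dotn t u + lam * gam.
Proof.
rewrite !big_sumType /= big_ord1 big1 ?add0r => [|ka _]; last by rewrite mulr0.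
rewrite addrA; congr (_ + _ + _); last by apply: eq_bigr => i _; rewrite mxE.
rewrite /B exchange_big /=; apply: eq_bigr => -[[k v] s] _ /=.
rewrite [RHS](bigD1 k) //= eqxx [X in _ + X]big1 ?addr0 // => k' /negbTE.
by rewrite eq_sym => ->; rewrite !mulr0.
Qed.

Lemma cert_rhs_ge0 u gam : g u = gam%:E -> 0 <= \sum_r y r * lp_rhs u gam r.
Proof.
move=> gu; rewrite cert_rhsE leNgt; apply/negP => rhs_lt0.
have t_ge0 : nonneg t by apply/nonneg_rowP => i; rewrite mxE.
have [s [s_gt0 s_lam gam_lt]] :=
  @exists_scale_gt _ lam gam (- \sum_k B k - dotn t u) (y_ge0 _) ltac:(lra).
have := g_ge_scaled u t_ge0 (y_ge0 _) cert_flow_bound s_gt0 s_lam.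
by rewrite gu lee_fin leNgt gam_lt.
Qed.

End Certificate.

Lemma lp_feasible u gam : g u = gam%:E ->
  exists x, forall r, lp_row r x <= lp_rhs u gam r.
Proof.
move=> gu; case: (farkas lp_coef (lp_rhs u gam)) => [[x x_sol]|[y [y_ge0 y_coef y_rhs]]].
  by exists x => r; rewrite -lp_rowE.
by have := cert_rhs_ge0 y_ge0 y_coef gu; rewrite leNgt y_rhs.
Qed.

Lemma bfd_of_lp_solution (k0 : K) u gam x : g u = gam%:E ->
  (forall r, lp_row r x <= lp_rhs u gam r) -> exists wk, bfd u wk.
Proof.
move=> gu x_sol; pose xk k a := x (k, a).
have Xxk k : X k (xk k).
  split=> [v|a]; last by have := x_sol (inl (k, a)); rewrite /= oppr_le0.
  have := x_sol (inr (inl (k, v, true))); have := x_sol (inr (inl (k, v, false))).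
  by rewrite /= expr0 expr1 !mul1r !mulN1r lerN2 => ge_b le_b; apply/le_anti/andP.
have x_ge0 k a : 0 <= x (k, a) by case: (Xxk k) => _; apply.
have load i : \sum_k x (k, enum_val i) <= u ord0 i := x_sol (inr (inr (inl i))).
have cost : \sum_k costx c (xk k) <= gam := x_sol (inr (inr (inr ord0))).
pose slack i := u ord0 i - \sum_k x (k, enum_val i).
pose wk k : vecn := \row_i (x (k, enum_val i) + (k == k0)%:R * slack i).
have dec : decomposition u wk.
  split=> [k|]; first apply/nonneg_rowP => i.
    by rewrite mxE addr_ge0 ?mulr_ge0 ?subr_ge0 ?load.
  apply/rowP => i; rewrite summxE; under eq_bigr do rewrite mxE.
  rewrite big_split /= [X in _ + X](bigD1 k0) //= eqxx mul1r.
  rewrite [X in _ + (_ + X)]big1 ?addr0 => [|k /negbTE ->]; last by rewrite mul0r.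
  by rewrite addrC subrK.
exists wk; split=> //; apply/le_anti/andP; split; first by case: dec => _ <-; apply: g_le_sum.
apply: le_trans (_ : (\sum_k (costx c (xk k))%:E <= _)%E).
  apply: lee_sum => k _; apply: gk_le_cost (Xxk k) _ => i.
  by rewrite mxE lerDl mulr_ge0 ?subr_ge0 ?load.
by rewrite sumEFin gu lee_fin.
Qed.

(* Without commodities the slack of an LP solution cannot be assigned to
   anyone; instead [f = 0], and finiteness of [g u] forces [u = 0]. *)
Lemma bfd_no_commodity u gam : (K -> False) -> g u = gam%:E -> exists wk, bfd u wk.
Proof.
move=> K0 gu; have f0 t : f t = 0 by rewrite /f big1 // => k; case: (K0 k).
have uu0 : dotn u u = 0.
  have uu_ge0 : 0 <= dotn u u by apply: sumr_ge0 => i _; rewrite -expr2 sqr_ge0.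
  apply/le_anti; rewrite uu_ge0 andbT leNgt; apply/negP => uu_gt0.
  have [s [s_gt0 _ gam_lt]] := @exists_scale_gt _ 0 gam (dotn u u) (lexx 0) ltac:(by rewrite mul0r).
  have := g_ge u (- s *: u); rewrite gu f0 dotnZl sub0e -EFinN lee_fin mulNr opprK.
  by rewrite leNgt gam_lt.
have u0 : u = 0.
  apply/rowP => i; rewrite mxE; apply/eqP; rewrite -sqrf_eq0 expr2; apply/eqP.
  by move: uu0 => /psumr_eq0P; apply => // j _; rewrite -expr2 sqr_ge0.
have g0 : g u = 0.
  apply/le_anti; rewrite g_ge0 andbT; apply: ge_ereal_sup => _ [t _ <-].
  by rewrite u0 f0 dotn0r sub0e oppe0.
exists (fun=> 0); split; first split=> [k|]; first by case: (K0 k).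
  by rewrite big1 // => k; case: (K0 k).
by rewrite g0 big1 // => k; case: (K0 k).
Qed.

Lemma exists_bfd u gam : g u = gam%:E -> exists wk, bfd u wk.
Proof.
move=> gu; case: (pickP (fun _ : K => true)) => [k0 _|K0].
  by have [x x_sol] := lp_feasible gu; apply: bfd_of_lp_solution k0 _ _ x gu x_sol.
by apply: bfd_no_commodity gu => k; have := K0 k.
Qed.

Lemma epi_g_fin (p : pt R A1) : epi g p -> exists2 r, g p.1 = r%:E & r <= p.2.
Proof.
move=> gp_le; move: (g_ge0 p.1) (gp_le : (g p.1 <= p.2%:E)%E).
case: (g p.1) => [r _ r_le||] //.
by exists r; rewrite // -lee_fin.
Qed.

Lemma bfd_values (u : vecn) uk : bfd u uk ->
  exists2 a : K -> R, (forall k, gk k (uk k) = (a k)%:E) & g u = (\sum_k a k)%:E.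
Proof.
move=> [[uk_ge0 _] gu]; exists (fun k => fine (gk k (uk k))) => [k|].
  by have [r -> _] := gk_fin k (uk_ge0 k).
rewrite gu -sumEFin; apply: eq_bigr => k _.
by have [r -> _] := gk_fin k (uk_ge0 k).
Qed.

Lemma epi_g_decomposition (p : pt R A1) : epi g p ->
  exists uk (a : K -> R), [/\ decomposition p.1 uk, forall k, gk k (uk k) = (a k)%:E
                            & \sum_k a k <= p.2].
Proof.
move=> /epi_g_fin [r gp r_le]; have [uk uk_bfd] := exists_bfd gp.
have [a aE] := bfd_values uk_bfd; rewrite gp => -[ra].
by exists uk, a; split; [case: uk_bfd | exact: aE | rewrite -ra].
Qed.

Lemma comb_bfd (uk vk : K -> vecn) (a b : K -> R) l w gam :
  (forall k, nonneg (uk k)) -> (forall k, nonneg (vk k)) ->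
  (forall k, gk k (uk k) = (a k)%:E) -> (forall k, gk k (vk k) = (b k)%:E) -> 0 <= l <= 1 ->
  \sum_k (l *: uk k + (1 - l) *: vk k) = w -> g w = gam%:E ->
  l * \sum_k a k + (1 - l) * \sum_k b k <= gam ->
  bfd w (fun k => l *: uk k + (1 - l) *: vk k) /\
  forall k, gk k (l *: uk k + (1 - l) *: vk k) = (l * a k + (1 - l) * b k)%:E.
Proof.
move=> uk_ge0 vk_ge0 aE bE /andP[l_ge0 l_le1] zk_sum gw le_gam.
pose zk k := l *: uk k + (1 - l) *: vk k.
have zk_ge0 k : nonneg (zk k) by rewrite nonnegD ?nonnegZ ?uk_ge0 ?vk_ge0 ?subr_ge0.
have [z zE] : exists z : K -> R, forall k, gk k (zk k) = (z k)%:E.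
  by exists (fun k => fine (gk k (zk k))) => k; have [r -> _] := gk_fin k (zk_ge0 k).
have z_le k : z k <= l * a k + (1 - l) * b k.
  by rewrite -lee_fin -zE; apply: gk_convex; rewrite ?l_ge0.
have gam_le : gam <= \sum_k z k.
  rewrite -lee_fin -gw -zk_sum -sumEFin; apply: le_trans (g_le_sum zk) _.
  by under eq_bigr do rewrite zE.
have sum_le : \sum_k (l * a k + (1 - l) * b k) <= gam.
  by rewrite big_split /= -!mulr_sumr.
have zE' := ler_sum_eq z_le (le_trans sum_le gam_le).
split=> [|k]; last by rewrite -/(zk k) zE zE'.
split=> //; rewrite gw; under eq_bigr do rewrite zE zE'.
rewrite sumEFin; congr _%:E; apply/le_anti; rewrite sum_le andbT.
by under eq_bigr do rewrite -zE'.
Qed.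

Lemma epi_g_replace (z : K -> vecn) (m : K -> R) j (p : pt R A1) :
  (forall k, (gk k (z k) <= (m k)%:E)%E) -> epi (gk j) p ->
  epi g (\sum_k z k - z j + p.1, \sum_k m k - m j + p.2).
Proof.
move=> z_le epi_p; rewrite /epi /= !sum_replace; apply: le_trans (g_le_sum _) _.
by rewrite -sumEFin; apply: lee_sum => k _; case: eqP => [->|_].
Qed.

Lemma extreme_component (wk : K -> vecn) (a : K -> R) (w : vecn) gam :
  extreme_point (epi g) (w, gam) -> \sum_k wk k = w -> \sum_k a k = gam ->
  (forall k, (gk k (wk k) <= (a k)%:E)%E) ->
  forall j, extreme_point (epi (gk j)) (wk j, a j).
Proof.
move=> ext wk_sum a_sum wk_le j p q l epi_p epi_q l01 pq.
pose s := \sum_k wk k - wk j; pose tau := \sum_k a k - a j.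
have wE : w = s + wk j by rewrite /s subrK.
have gamE : gam = tau + a j by rewrite /tau subrK.
have [] := ext (s + p.1, tau + p.2) (s + q.1, tau + q.2) l
  (epi_g_replace wk_le epi_p) (epi_g_replace wk_le epi_q) l01 _.
  by rewrite comb_translate pq wE gamE.
rewrite wE gamE => -[/addrI p1E /addrI p2E] [/addrI q1E /addrI q2E].
by rewrite [p]surjective_pairing [q]surjective_pairing p1E p2E q1E q2E.
Qed.

Lemma bfd_unique w gam wk wk' : extreme_point (epi g) (w, gam) -> g w = gam%:E ->
  bfd w wk -> bfd w wk' -> forall k, wk k = wk' k.
Proof.
move=> ext gw bfd_wk bfd_wk'.
have [a aE] := bfd_values bfd_wk; rewrite gw => -[a_sum].
have [b bE] := bfd_values bfd_wk'; rewrite gw => -[b_sum].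
case: bfd_wk bfd_wk' => [[wk_ge0 wk_sum] _] [[wk'_ge0 wk'_sum] _].
have half01 : 0 <= (1/2 : R) <= 1 by apply/andP; split; lra.
pose mid k := 1/2 *: wk k + (1 - 1/2) *: wk' k.
pose m k := 1/2 * a k + (1 - 1/2) * b k.
have mid_sum : \sum_k mid k = w.
  by rewrite /mid big_split /= -!scaler_sumr wk_sum wk'_sum -scalerDl addrC subrK scale1r.
have m_sum : \sum_k m k = gam by rewrite /m big_split /= -!mulr_sumr -a_sum -b_sum; ring.
have le_gam : 1/2 * \sum_k a k + (1 - 1/2) * \sum_k b k <= gam.
  by rewrite -a_sum -b_sum; lra.
have [_ midE] := comb_bfd wk_ge0 wk'_ge0 aE bE half01 mid_sum gw le_gam.
have mid_le k : (gk k (mid k) <= (m k)%:E)%E by rewrite midE.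
move=> k; have [] := extreme_component ext mid_sum m_sum mid_le (j := k)
  (p := (wk k, a k)) (q := (wk' k, b k)) (l := 1/2).
- by rewrite /epi /= aE.
- by rewrite /epi /= bE.
- by apply/andP; split; lra.
- by [].
by move=> [-> _] [-> _].
Qed.

Lemma sbf_unique_decomposition w : strongly_bf_wrt g w ->
  exists wk, [/\ bfd w wk, forall wk', bfd w wk' -> forall k, wk' k = wk k
              & forall k, strongly_bf_wrt (gk k) (wk k)].
Proof.
move=> /strongly_bf_wrtP [_ [gam [gw ext]]]; have [wk bfd_wk] := exists_bfd gw.
exists wk; split=> // [wk' bfd_wk' k|k]; first exact: bfd_unique ext gw bfd_wk' bfd_wk k.
have [a aE] := bfd_values bfd_wk; rewrite gw => -[a_sum].
case: bfd_wk => [[wk_ge0 wk_sum] _]; apply/strongly_bf_wrtP; split=> //.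
have wk_le j : (gk j (wk j) <= (a j)%:E)%E by rewrite aE.
by exists (a k); split=> //; apply: (extreme_component ext wk_sum (esym a_sum) wk_le (j := k)).
Qed.

Lemma unique_decomposition_sbf w wk : nonneg w -> bfd w wk ->
  (forall wk', bfd w wk' -> forall k, wk' k = wk k) ->
  (forall k, strongly_bf_wrt (gk k) (wk k)) -> strongly_bf_wrt g w.
Proof.
move=> w_ge0 bfd_wk uniq sbf_k; have [a aE gw] := bfd_values bfd_wk.
have ext_k k : extreme_point (epi (gk k)) (wk k, a k).
  by have /strongly_bf_wrtP [_ [r [rE ext]]] := sbf_k k; move: rE; rewrite aE => -[->].
apply/strongly_bf_wrtP; split=> //; exists (\sum_k a k); split=> // p q l epi_p epi_q l01.
have [uk [al [[uk_ge0 uk_sum] alE al_le]]] := epi_g_decomposition epi_p.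
have [vk [be [[vk_ge0 vk_sum] beE be_le]]] := epi_g_decomposition epi_q.
rewrite /comb => -[pq1 pq2]; have /andP[l_gt0 l_lt1] := l01.
pose zk k := l *: uk k + (1 - l) *: vk k.
have zk_sum : \sum_k zk k = w by rewrite /zk big_split /= -!scaler_sumr uk_sum vk_sum.
have le_sum : l * \sum_k al k + (1 - l) * \sum_k be k <= \sum_k a k.
  by rewrite -pq2 lerD // ler_wpM2l // ?subr_ge0 ltW.
have l01' : 0 <= l <= 1 by rewrite !ltW.
have [bfd_zk zkE] := comb_bfd uk_ge0 vk_ge0 alE beE l01' zk_sum gw le_sum.
have zk_wk k : zk k = wk k := uniq _ bfd_zk k.
have comp k : (uk k, al k) = (wk k, a k) /\ (vk k, be k) = (wk k, a k).
  apply: (ext_k k) l01 _; rewrite /epi /= ?alE ?beE //.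
  rewrite /comb /= -/(zk k) zk_wk; congr (_, _).
  by have := zkE k; rewrite -/(zk k) zk_wk aE => -[].
case: bfd_wk => [[_ wk_sum] _].
have p1 : p.1 = w by rewrite -uk_sum -wk_sum; apply: eq_bigr => k _; case: (comp k) => -[-> _].
have q1 : q.1 = w by rewrite -vk_sum -wk_sum; apply: eq_bigr => k _; case: (comp k) => _ [-> _].
have al_sum : \sum_k al k = \sum_k a k by apply: eq_bigr => k _; case: (comp k) => -[_ ->].
have be_sum : \sum_k be k = \sum_k a k by apply: eq_bigr => k _; case: (comp k) => _ [_ ->].
rewrite al_sum in al_le; rewrite be_sum in be_le.
have [p2 q2] := comb_eq_lb l01 al_le be_le pq2.
by rewrite [p]surjective_pairing [q]surjective_pairing p1 p2 q1 q2.
Qed.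

End Network.

Theorem theorem4 (R : realType) (V A : finType) (src dst : A -> V) (c : A -> R)
  (A1 : {set A}) (K : finType) (o d : K -> V)
  (Hnet : network_assumptions src dst c A1 o d)
  (w : 'rV[R]_#|A1|) (Hw : nonneg w) :
  strongly_bilevel_feasible src dst c o d w <->
  exists wk : K -> 'rV[R]_#|A1|,
    bilevel_feasible_decomposition src dst c o d w wk /\
    (forall wk' : K -> 'rV[R]_#|A1|,
        bilevel_feasible_decomposition src dst c o d w wk' -> forall k, wk' k = wk k) /\
    (forall k, indiv_strongly_bilevel_feasible src dst c o d k (wk k)).
Proof.
split=> [/(sbf_unique_decomposition Hnet) [wk [bfd_wk uniq sbf_k]]|[wk [bfd_wk [uniq sbf_k]]]].
  by exists wk.
exact: (unique_decomposition_sbf Hnet Hw bfd_wk uniq sbf_k).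
Qed.
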